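(* Assume that the continuum $\mathfrak{c}$ is a regular cardinal. Let $X$ be a Polish space, let $\{Y_\alpha:\alpha<\mathfrak{c}\}$ be Polish spaces, and let $\{f_\alpha:\alpha<\mathfrak{c}\}$ be functions $f_\alpha: X\to Y_\alpha$ such that for every $\alpha<\mathfrak{c}$: (1) $f_\alpha[X]=Y_\alpha$; (2) for every $y\in Y_\alpha$, $|f_\alpha^{-1}[\{y\}]|<\mathfrak{c}$. Then there exists $A\subseteq X$ such that for every $\alpha<\mathfrak{c}$ the image $f_\alpha[A]$ is a Bernstein set in $Y_\alpha$.
   Context: A subset $S$ of a Polish space $Y$ is a Bernstein set in $Y$ if for every nonempty perfect set $P\subseteq Y$ we have $S\cap P\neq\emptyset$ and $(Y\setminus S)\cap P\neq\emptyset$. The functions $f_\alpha$ are arbitrary (no continuity is assumed). *)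

From HB Require Import structures.
From mathcomp Require Import all_boot all_order all_algebra.
From mathcomp Require Import all_classical all_reals all_analysis.
From mathcomp Require Import Rstruct Rstruct_topology.
From Stdlib Require Import Reals.

Set Implicit Arguments.
Unset Strict Implicit.
Unset Printing Implicit Defensive.

Import Order.TTheory GRing.Theory Num.Theory.
Local Open Scope classical_set_scope.
Local Open Scope ring_scope.

(* The continuum c is the cardinality of the real line [set: R]
   (R = Stdlib's real numbers, a realType via Rstruct). *)
Definition continuum : set R := [set: R].

Definition card_lt T U (A : set T) (B : set U) : Prop :=
  (A #<= B)%card /\ ~ (B #<= A)%card.

(* c is regular: c is not the union of fewer than c sets each of size
   less than c (equivalently, cf(c) = c). *)
Definition continuum_regular : Prop :=
  forall (J : Type) (F : J -> set R),
    card_lt [set: J] continuum ->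
    (forall j, card_lt (F j) continuum) ->
    card_lt (\bigcup_j F j) continuum.

Definition complete_compatible_metric (T : topologicalType) (d : T -> T -> R)
  : Prop :=
  [/\ (forall x y, 0 <= d x y) /\ (forall x y, d x y = 0 <-> x = y),
      (forall x y, d x y = d y x),
      (forall x y z, d x z <= d x y + d y z),
      (forall U : set T, open U <->
         (forall x, U x -> (exists2 e : R, 0 < e & [set y | d x y < e] `<=` U))) &
      (forall u : nat -> T,
         (forall e : R, 0 < e -> exists N : nat, forall m n : nat,
             leq N m -> leq N n -> d (u m) (u n) < e) ->
         exists l : T, u @ \oo --> l)].

Definition polish_space (T : topologicalType) : Prop :=
  (exists D : set T, countable D /\ dense D) /\
  (exists d : T -> T -> R, complete_compatible_metric d).

Definition bernstein_set (Y : topologicalType) (S : set Y) : Prop :=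
  forall P : set Y, perfect_set P -> P !=set0 ->
    (S `&` P !=set0) /\ (~` S `&` P !=set0).

From HB Require Import structures.
From mathcomp Require Import all_boot all_order all_algebra.
From mathcomp Require Import all_classical all_reals all_analysis.
From mathcomp Require Import Rstruct Rstruct_topology.
From Stdlib Require Import Reals Inverse_Image.
From mathcomp Require Import wochoice lra.

(* The pairs (i, P) with P a nonempty perfect subset of Y_i are at most c many,
   since |I| = c and a Polish space has at most c closed sets; well-order them so
   that every initial segment has size < c.  At stage (i, P) choose a point x with
   f_i(x) in P outside the fibres forbidden so far, and a witness y in P outside
   f_i[{x} together with the earlier points]; then forbid the fibre f_i^-1(y) to
   all later points.  Both choices are possible because P contains a Cantor set,
   so |P| = c, while by regularity of c the earlier points and forbidden fibres
   form sets of size < c.  The chosen points form A: f_i(x) lies in f_i[A] and P,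
   and y lies in P but not in f_i[A]. *)

Set Implicit Arguments.
Unset Strict Implicit.
Unset Printing Implicit Defensive.
Import Order.TTheory GRing.Theory Num.Theory.
Local Open Scope classical_set_scope.
Local Open Scope ring_scope.
Definition small T (A : set T) := card_lt A continuum.

Lemma card_le_inj T U (A : set T) (B : set U) (f : T -> U) :
  {in A &, injective f} -> f @` A `<=` B -> (A #<= B)%card.
Proof.
move=> f_inj fAB; apply: (card_le_trans _ (subset_card_le fAB)).
by have := inj_card_eq f_inj; rewrite card_eq_sym card_eq_le => /andP[].
Qed.

Lemma small_le T U (A : set T) (B : set U) :
  (A #<= B)%card -> small B -> small A.
Proof.
move=> AB [Bc not_cB]; split; first exact: card_le_trans AB Bc.
by move=> cA; apply: not_cB; exact: card_le_trans cA AB.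
Qed.

Lemma small_sub T (A B : set T) : A `<=` B -> small B -> small A.
Proof. by move=> /subset_card_le; exact: small_le. Qed.

Lemma small_image T U (f : T -> U) (A : set T) : small A -> small (f @` A).
Proof. exact/small_le/card_image_le. Qed.

Lemma not_small T (A : set T) : (continuum #<= A)%card -> ~ small A.
Proof. by move=> cA []. Qed.

Lemma continuum_inj T : ([set: T] #<= continuum)%card -> exists f : T -> R, injective f.
Proof. by move=> /pcard_injP[f f_inj]; exists f => x y; apply: f_inj; rewrite in_setE. Qed.

Lemma nat_le_continuum : ([set: nat] #<= continuum)%card.
Proof.
apply: (@card_le_inj _ _ _ _ (fun n : nat => n%:R : R)) => // m n _ _ /eqP.
by rewrite eqr_nat => /eqP.
Qed.

Lemma small_finite T (A : set T) : finite_set A -> small A.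
Proof.
move=> A_fin; split.
  have [n An] := (finite_set_leP A).1 A_fin.
  apply: card_le_trans An _; apply: card_le_trans nat_le_continuum.
  exact: card_leT.
by move=> /card_le_finite/(_ A_fin)/finite_setPn; apply; exact: nat_le_continuum.
Qed.

Lemma nonsmall_outside T (A S : set T) :
  ~ small A -> small S -> exists2 x, A x & ~ S x.
Proof.
move=> A_large S_small; apply: contrapT => noA; apply/A_large/(small_sub _ S_small).
by move=> x Ax; apply: contrapT => Sx; apply: noA; exists x.
Qed.

Section RegularContinuum.
Hypothesis reg : continuum_regular.

Lemma small_bigcup T J (F : J -> set T) : ([set: T] #<= continuum)%card ->
  small [set: J] -> (forall j, small (F j)) -> small (\bigcup_j F j).
Proof.
move=> /continuum_inj[chi chi_inj] J_small F_small.
have chi_inj' : {in \bigcup_j F j &, injective chi} by move=> x y _ _; exact: chi_inj.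
apply: (small_le (B := chi @` \bigcup_j F j)); first exact: card_le_inj chi_inj' _.
by rewrite image_bigcup; apply: reg => // j; exact: small_image.
Qed.

Lemma small_setU T (A B : set T) : ([set: T] #<= continuum)%card ->
  small A -> small B -> small (A `|` B).
Proof.
move=> Tc A_small B_small.
have -> : A `|` B = \bigcup_(b : bool) (if b then A else B).
  by apply/seteqP; split=> [x [Ax|Bx]|x [[] _ ?]]; by [exists true|exists false|left|right].
by apply: small_bigcup => // [|[]//]; exact/small_finite/finite_finset.
Qed.

End RegularContinuum.

Lemma wf_minimal T (lt : T -> T -> Prop) (A : set T) :
  well_founded lt -> A !=set0 -> exists2 z, A z & forall y, lt y z -> ~ A y.
Proof.
move=> lt_wf [x Ax]; elim: (lt_wf x) Ax => {}x _ IH Ax.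
have [[y [yx Ay]]|x_min] := pselect (exists y, lt y x /\ A y); first exact: IH y yx Ay.
by exists x => // y yx Ay; apply: x_min; exists y.
Qed.

Lemma exists_wf_total_order (T : eqType) : exists lt : T -> T -> Prop,
  well_founded lt /\ forall x y, lt x y \/ x = y \/ lt y x.
Proof.
have [W W_wo] := well_ordering_principle T.
have W_chain : wo_chain W predT by exact: withinW.
have W_total x y : W x y || W y x := wo_chainW W_chain isT isT.
have W_anti x y : W x y && W y x -> x = y := wo_chain_antisymmetric W_chain isT isT.
pose lt x y := W x y /\ x <> y.
exists lt; split; last first.
  move=> x y; have [->|xy] := pselect (x = y); first by right; left.
  by case/orP: (W_total x y) => ?; [left|right; right]; split=> // /esym.
move=> x; apply: contrapT => x_inacc.
have [|z [[z_inacc z_min] _]] := W_wo (fun y => `[< ~ Acc lt y >]).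
  by exists x; rewrite unfold_in; exact/asboolP.
move: z_inacc; rewrite unfold_in => /asboolP; apply; constructor => y [Wyz yz].
apply: contrapT => y_inacc; apply: yz; apply: W_anti; rewrite Wyz z_min //.
by rewrite unfold_in; exact/asboolP.
Qed.

Lemma wo_small_segments (T : pointedType) : exists lt : T -> T -> Prop,
  [/\ well_founded lt, forall x y, lt x y \/ x = y \/ lt y x &
      forall x, card_lt [set y | lt y x] [set: T]].
Proof.
have [lt [lt_wf lt_total]] := exists_wf_total_order T.
have [|] := pselect (forall x, card_lt [set y | lt y x] [set: T]); first by exists lt.
move=> /existsNP[x1 x1_large].
have [x0 x0_large x0_min] :=
  wf_minimal lt_wf (ex_intro (fun x => ~ card_lt [set y | lt y x] [set: T]) x1 x1_large).
have /pcard_leP[h] : ([set: T] #<= [set y | lt y x0])%card.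
  by apply: contrapT => Tx0; apply: x0_large; split=> //; exact: card_leT.
have h_lt x : lt (h x) x0 by exact: (@funS _ _ _ _ h x I).
have h_inj : injective h by move=> x y; apply: (@inj _ _ _ h); exact: mem_set.
exists (fun x y => lt (h x) (h y)); split.
- exact: wf_inverse_image.
- by move=> x y; have [|[/h_inj|]] := lt_total (h x) (h y); auto.
- move=> x; have /contrapT[_ hx_small] := x0_min _ (h_lt x).
  split; first exact: card_leT.
  move=> /card_le_trans Tle; apply/hx_small/Tle.
  by apply: (card_le_inj (f := h)) => [a b _ _ /h_inj|_ [y hy <-]].
Qed.

Lemma small_segment_order T : ([set: T] #<= continuum)%card ->
  exists lt : T -> T -> Prop, [/\ well_founded lt,
    forall x y, lt x y \/ x = y \/ lt y x & forall x, small [set y | lt y x]].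
Proof.
move=> /continuum_inj[code code_inj].
have [ltR [ltR_wf ltR_total ltR_small]] := wo_small_segments R.
exists (fun x y => ltR (code x) (code y)); split.
- exact: wf_inverse_image.
- by move=> x y; have [|[/code_inj|]] := ltR_total (code x) (code y); auto.
- move=> x; apply: small_le (ltR_small (code x)).
  by apply: (card_le_inj (f := code)) => [a b _ _ /code_inj|_ [y ? <-]].
Qed.

Lemma wf_rec_choice (T : Type) (A : T -> Type) (lt : T -> T -> Prop)
    (good : forall x, (forall y, lt y x -> A y) -> A x -> Prop) :
  well_founded lt -> (forall x h, exists a, good x h a) ->
  exists g : forall x, A x, forall x, good x (fun y _ => g y) (g x).
Proof.
move=> lt_wf good_ex; pose step x h := sval (cid (good_ex x h)).
exists (Fix lt_wf A step) => x; rewrite Fix_eq; first exact: svalP (cid _).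
move=> y h1 h2 h12; congr step.
by apply: functional_extensionality_dep => z; apply: functional_extensionality_dep.
Qed.

Section TransfiniteConstruction.
Variables (I X : Type) (Y : I -> Type) (f : forall i, X -> Y i).
Hypothesis reg : continuum_regular.
Hypothesis X_le_c : ([set: X] #<= continuum)%card.
Hypothesis f_surj : forall i, f i @` [set: X] = [set: Y i].
Hypothesis fiber_small : forall i (y : Y i), small (f i @^-1` [set y]).

Lemma exists_fresh_pair i (P : set (Y i)) (placed forbidden : set X) :
  ~ small P -> small placed -> small forbidden ->
  exists x y, [/\ P (f i x), ~ forbidden x, P y & ~ (f i @` (x |` placed)) y].
Proof.
move=> P_large placed_small forbidden_small.
have [p Pp p_fresh] := nonsmall_outside P_large (small_image (f i) forbidden_small).
have : [set: Y i] p by [].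
rewrite -f_surj => -[x _ fxp].
have x_placed_small := small_setU reg X_le_c (small_finite (finite_set1 x)) placed_small.
have [y Py y_fresh] := nonsmall_outside P_large (small_image (f i) x_placed_small).
by exists x, y; split=> //; [rewrite fxp | move=> ?; apply: p_fresh; exists x].
Qed.

Variables (J : Type) (idx : J -> I) (P : forall j : J, set (Y (idx j))).
Arguments P : clear implicits.
Hypothesis P_large : forall j, ~ small (P j).
Arguments P_large : clear implicits.
Variable lt : J -> J -> Prop.
Hypothesis lt_wf : well_founded lt.
Hypothesis lt_total : forall j k, lt j k \/ j = k \/ lt k j.
Hypothesis lt_small : forall j, small [set k | lt k j].

(* Stage k records the point x_k put into the set and the witness y_k in P k
   that is kept out of its image. *)
Definition history j := forall k, lt k j -> X * Y (idx k).

Definition placed j (h : history j) : set X :=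
  [set x | exists k (ltkj : lt k j), (h k ltkj).1 = x].

Definition forbidden j (h : history j) : set X :=
  [set x | exists k (ltkj : lt k j), f (idx k) x = (h k ltkj).2].

Definition fresh_stage j (h : history j) (s : X * Y (idx j)) : Prop :=
  [/\ P j (f (idx j) s.1), ~ forbidden h s.1, P j s.2
    & ~ (f (idx j) @` (s.1 |` placed h)) s.2].

Lemma small_predecessors j : small [set: {k | lt k j}].
Proof.
apply: small_le (lt_small j); apply: (card_le_inj (f := sval)).
  by move=> [a ha] [b hb] _ _ /= eab; subst b; congr exist; exact: Prop_irrelevance.
by move=> _ [k _ <-]; exact: svalP k.
Qed.

Lemma exists_fresh_stage j (h : history j) : exists s, fresh_stage h s.
Proof.
have placed_small : small (placed h).
  pose point (k : {k | lt k j}) := (h (sval k) (proj2_sig k)).1.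
  apply: small_sub (small_image point (small_predecessors j)).
  by rewrite /placed => _ [k [ltkj <-]]; exists (exist _ k ltkj).
have forbidden_small : small (forbidden h).
  pose fiber (k : {k | lt k j}) := f (idx (sval k)) @^-1` [set (h (sval k) (proj2_sig k)).2].
  have := small_bigcup reg (F := fiber) X_le_c (small_predecessors j)
    (fun k => fiber_small _).
  by apply: small_sub; rewrite /forbidden => x [k [ltkj fx]]; exists (exist _ k ltkj).
have [x [y fresh]] := exists_fresh_pair (P_large j) placed_small forbidden_small.
by exists (x, y).
Qed.

Lemma exists_splitting_set : exists A : set X, forall j,
  f (idx j) @` A `&` P j !=set0 /\ ~` (f (idx j) @` A) `&` P j !=set0.
Proof.
have [g g_fresh] := wf_rec_choice lt_wf exists_fresh_stage.
exists (range (fun j => (g j).1)) => j.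
have [Px _ Py y_fresh] := g_fresh j.
split; first by exists (f (idx j) (g j).1); split=> //; exists (g j).1 => //; exists j.
exists (g j).2; split=> // -[_ [k _ <-] fxk].
have [ltkj|[kj|ltjk]] := lt_total k j.
- by apply: y_fresh; exists (g k).1 => //; right; exists k, ltkj.
- by apply: y_fresh; exists (g k).1 => //; left; rewrite kj.
- by have [_ xk_free _ _] := g_fresh k; apply: xk_free; exists j, ltjk.
Qed.

End TransfiniteConstruction.

Section CompatibleMetric.
Variables (T : topologicalType) (d : T -> T -> R).
Hypothesis hd : complete_compatible_metric d.

Lemma metric_ge0 x y : 0 <= d x y.
Proof. by case: hd => -[]. Qed.

Lemma metric_eq0 x y : d x y = 0 <-> x = y.
Proof. by case: hd => -[]. Qed.

Lemma metric_xx x : d x x = 0.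
Proof. exact/metric_eq0. Qed.

Lemma metric_gt0 x y : x <> y -> 0 < d x y.
Proof. by move=> xy; rewrite lt_neqAle metric_ge0 andbT eq_sym; apply/eqP => /metric_eq0. Qed.

Lemma metric_sym x y : d x y = d y x.
Proof. by case: hd. Qed.

Lemma metric_triangle x y z : d x z <= d x y + d y z.
Proof. by case: hd. Qed.

Lemma metric_openP (U : set T) :
  open U <-> forall x, U x -> exists2 e, 0 < e & [set y | d x y < e] `<=` U.
Proof. by case: hd. Qed.

Lemma metric_complete (u : nat -> T) :
  (forall e, 0 < e -> exists N,
    forall m n, (N <= m)%nat -> (N <= n)%nat -> d (u m) (u n) < e) ->
  exists l : T, u @ \oo --> l.
Proof. by case: hd => _ _ _ _; apply. Qed.

Lemma open_metric_ball x e : open [set y | d x y < e].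
Proof.
apply/metric_openP => y dxy; exists (e - d x y); first by rewrite subr_gt0.
by move=> z /= dyz; have := metric_triangle x y z; lra.
Qed.

Lemma nbhs_metric_ball x e : 0 < e -> nbhs x [set y | d x y < e].
Proof.
by move=> e0; apply: open_nbhs_nbhs; split; [exact: open_metric_ball | rewrite /= metric_xx].
Qed.

Lemma metric_cvg (u : nat -> T) l : u @ \oo --> l ->
  forall e, 0 < e -> exists N, forall n, (N <= n)%nat -> d l (u n) < e.
Proof. by move=> ul e e0; have [N _ uN] := ul _ (nbhs_metric_ball l e0); exists N. Qed.

Lemma dense_metric_ball (D : set T) : dense D ->
  forall x e, 0 < e -> exists2 z, D z & d x z < e.
Proof.
move=> D_dense x e e0.
have [|z [xz Dz]] := D_dense _ _ (open_metric_ball x e); last by exists z.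
by exists x; rewrite /= metric_xx.
Qed.

Lemma closed_metric_set1 (x : T) : closed [set x].
Proof.
rewrite -[[set x]]setCK; apply: open_closedC; apply/metric_openP => y /eqP yx.
exists (d y x); first by apply: metric_gt0; apply/eqP.
by move=> z /= dyz zx; move: dyz; rewrite zx ltxx.
Qed.

End CompatibleMetric.

Lemma real_metric : complete_compatible_metric (fun x y : R => `|x - y|).
Proof.
split.
- split=> x y; first exact: normr_ge0.
  by split=> [/eqP|->]; [rewrite normr_eq0 subr_eq0 => /eqP | rewrite subrr normr0].
- exact: distrC.
- by move=> x y z; exact: ler_distD.
- move=> U; rewrite openE; split=> [U_open x Ux|U_ball x Ux].
    have /nbhs_ballP[e e0 eU] := U_open x Ux.
    by exists e => // y; rewrite -ball_normE; apply: eU.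
  apply/nbhs_ballP; have [e e0 eU] := U_ball x Ux.
  by exists e => // y; rewrite -ball_normE; apply: eU.
- move=> u u_cauchy; have : cvg ((u : nat -> R^o) @ \oo).
    apply: cauchy_cvg; apply: cauchy_exP => e e0; have [N uN] := u_cauchy e e0.
    by exists (u N), N => // n Nn; rewrite -ball_normE; apply: uN.
  by exists (lim ((u : nat -> R^o) @ \oo)).
Qed.

Lemma real_perfect : perfect_set [set: R].
Proof.
apply/perfectTP => x /(metric_openP real_metric) /(_ x erefl)[e e0 ex].
have /ex : `|x - (x + e / 2)| < e by rewrite opprD addrA subrr sub0r normrN ger0_norm; lra.
by move=> /= /(congr1 (fun y => y - x)); rewrite addrC addKr subrr; lra.
Qed.

Section CantorScheme.
Variables (T : topologicalType) (d : T -> T -> R) (P : set T) (p0 : T).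
Variable next : T -> R -> T.
Hypotheses (hd : complete_compatible_metric d) (P_closed : closed P) (P_p0 : P p0).
Hypothesis nextP : forall c r, P c -> 0 < r ->
  [/\ P (next c r), 0 < d c (next c r) & d c (next c r) < r / 2].

(* Pairs (centre, radius); bit b m chooses between keeping the centre c and
   moving to next c r, and the new radius is at most d c (next c r) / 5, so the
   limits along the two choices stay apart. *)
Fixpoint scheme (b : nat -> bool) (n : nat) : T * R :=
  if n is m.+1 then
    let c := (scheme b m).1 in let r := (scheme b m).2 in
    (if b m then next c r else c, Num.min (r / 2) (d c (next c r) / 5))
  else (p0, 1).

Definition center b n := (scheme b n).1.
Definition radius b n := (scheme b n).2.
Arguments center b n /.
Arguments radius b n /.

Lemma scheme_inv b n : P (center b n) /\ 0 < radius b n.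
Proof.
elim: n => [|n [Pc r0]] /=; first by split; rewrite ?ltr01.
have [Pq dq0 _] := nextP Pc r0.
by split; [case: (b n) | rewrite lt_min !divr_gt0].
Qed.

Lemma radius_halves b n : radius b n.+1 <= radius b n / 2.
Proof. by rewrite /= ge_min lexx. Qed.

Lemma radius_le b n : radius b n <= (2 ^+ n)^-1.
Proof.
elim: n => [|n IH]; first by rewrite expr0 invr1.
apply: le_trans (radius_halves b n) _.
by rewrite exprS invfM mulrC; apply: ler_wpM2l; rewrite ?invr_ge0.
Qed.

Lemma center_step b n : d (center b n) (center b n.+1) <= radius b n / 2.
Proof.
have [Pc r0] := scheme_inv b n; have [_ _ dq] := nextP Pc r0.
by rewrite /=; case: (b n); [exact: ltW | rewrite metric_xx // divr_ge0 // ltW].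
Qed.

Lemma center_dist b n k :
  d (center b n) (center b (n + k)) <= radius b n - radius b (n + k).
Proof.
elim: k => [|k IH]; first by rewrite addn0 metric_xx // subrr.
rewrite addnS.
have := metric_triangle hd (center b n) (center b (n + k)) (center b (n + k).+1).
by have := center_step b (n + k); have := radius_halves b (n + k); lra.
Qed.

Lemma center_dist_le b n m : (n <= m)%nat -> d (center b n) (center b m) <= radius b n.
Proof.
move=> nm; have := center_dist b n (m - n); rewrite subnKC //.
by have := (scheme_inv b m).2; lra.
Qed.

Lemma center_cvg b : exists l : T, center b @ \oo --> l.
Proof.
apply: (metric_complete hd) => e e0.
have [N _ /(_ N (leqnn N)) Ne] :=
  near_infty_natSinv_expn_lt (PosNum (divr_gt0 e0 (ltr0Sn _ 1))).
exists N => m n Nm Nn; have := metric_triangle hd (center b m) (center b N) (center b n).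
rewrite (metric_sym hd (center b m) (center b N)); have := center_dist_le b Nm.
by have := center_dist_le b Nn; have := radius_le b N; rewrite /= mul1r in Ne; lra.
Qed.

Lemma center_limit_dist b l n : center b @ \oo --> l -> d (center b n) l <= radius b n.
Proof.
move=> bl; apply/ler_addgt0Pr => e e0; have [N Nl] := metric_cvg hd bl e0.
have := metric_triangle hd (center b n) (center b (maxn n N)) l.
rewrite (metric_sym hd (center b (maxn n N)) l); have := Nl _ (leq_maxr n N).
by have := center_dist_le b (leq_maxl n N); lra.
Qed.

Lemma center_limit_in b l : center b @ \oo --> l -> P l.
Proof.
move=> bl; apply: (closed_cvg P P_closed _ l bl).
by apply: nearW => n; exact: (scheme_inv b n).1.
Qed.

Lemma scheme_prefix b b' m : (forall k, (k < m)%nat -> b k = b' k) ->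
  scheme b m = scheme b' m.
Proof.
elim: m => [//|m IH] bb' /=; rewrite IH ?(bb' m) // => k km.
by apply: bb'; exact: ltnW.
Qed.

Lemma center_limits_differ b b' m (l l' : T) :
  b m = false -> b' m = true -> (forall k, (k < m)%nat -> b k = b' k) ->
  center b @ \oo --> l -> center b' @ \oo --> l' -> l <> l'.
Proof.
move=> bm b'm bb' bl b'l ll'; have [Pc r0] := scheme_inv b m.
have [_ dq0 _] := nextP Pc r0.
have := center_limit_dist m.+1 bl; have := center_limit_dist m.+1 b'l.
rewrite /= bm b'm -(scheme_prefix bb') -ll'.
set c := (scheme b m).1 in dq0 *; set r := (scheme b m).2 in dq0 *.
set q := next c r in dq0 *.
have := metric_triangle hd c l q; rewrite (metric_sym hd l q).
have : Num.min (r / 2) (d c q / 5) <= d c q / 5 by rewrite ge_min lexx orbT.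
lra.
Qed.

End CantorScheme.

Lemma first_difference (b b' : nat -> bool) : b <> b' ->
  exists m, b m != b' m /\ forall k, (k < m)%nat -> b k = b' k.
Proof.
move=> bb'; have ex : exists n, b n != b' n.
  apply: contrapT => no_diff; apply/bb'/funext => n; apply/eqP.
  by apply: contrapT => /negP bn; apply: no_diff; exists n.
case: (ex_minnP ex) => m bm m_min; exists m; split=> // k km.
by apply/eqP; apply: contraTT km => /m_min; rewrite leqNgt.
Qed.

Lemma perfect_bits_inj (T : topologicalType) (d : T -> T -> R) (P : set T) :
  complete_compatible_metric d -> perfect_set P -> P !=set0 ->
  exists2 h : (nat -> bool) -> T, injective h & forall b, P (h b).
Proof.
move=> hd [P_closed P_limit] [p0 P_p0].
have /choice[next nextP] : forall cr : T * R, exists q, P cr.1 -> 0 < cr.2 ->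
    [/\ P q, 0 < d cr.1 q & d cr.1 q < cr.2 / 2].
  move=> [c r] /=; have [[Pc r0]|Pcr] := pselect (P c /\ 0 < r); last first.
    by exists c => Pc r0; case: Pcr.
  have : limit_point P c by rewrite P_limit.
  move=> /(_ _ (nbhs_metric_ball hd c (divr_gt0 r0 (ltr0Sn _ 1))))[q [qc Pq cq]].
  by exists q => _ _; split=> //; apply: metric_gt0 => // cq'; rewrite cq' eqxx in qc.
have {}nextP c r : P c -> 0 < r ->
    [/\ P (next (c, r)), 0 < d c (next (c, r)) & d c (next (c, r)) < r / 2].
  exact: nextP (c, r).
have /choice[h h_cvg] := center_cvg hd P_p0 nextP.
exists h => [b b' hbb'|b]; last exact: (center_limit_in P_closed P_p0 nextP (h_cvg b)).
apply: contrapT => /first_difference[m [bm agree]].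
move: bm; case bm: (b m); case b'm: (b' m) => // _.
- apply: (center_limits_differ hd P_p0 nextP b'm bm _ (h_cvg b') (h_cvg b)) (esym hbb').
  by move=> k km; rewrite agree.
- exact: (center_limits_differ hd P_p0 nextP bm b'm agree (h_cvg b) (h_cvg b')).
Qed.

Lemma rat_cut_inj : injective (fun x : R => [set q : rat | ratr q < x]).
Proof.
have cut_lt (x y : R) : x < y -> [set q : rat | ratr q < x] <> [set q | ratr q < y].
  move=> xy /seteqP[_ yx]; have [q] := rat_in_itvoo xy.
  by rewrite in_itv /= => /andP[xq /yx]; rewrite /= ltNge (ltW xq).
move=> x y e; case: (ltgtP x y) => // /cut_lt; [move/(_ e) | move/(_ (esym e))]; by [].
Qed.

Definition set_bits (T : countType) (S : set T) (n : nat) : bool :=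
  if unpickle n is Some t then `[< S t >] else false.

Lemma set_bits_inj (T : countType) : injective (@set_bits T).
Proof.
move=> S S' SS'; apply/funext => t; apply/propext; apply: asbool_eq_equiv.
by have := congr1 (fun b => b (pickle t)) SS'; rewrite /set_bits pickleK.
Qed.

Lemma bits_le_continuum : ([set: nat -> bool] #<= continuum)%card.
Proof.
have [h h_inj _] := perfect_bits_inj real_metric real_perfect (ex_intro _ 0 I).
by apply/pcard_injP; exists h => b b' _ _ /h_inj.
Qed.

Lemma continuum_le_bits : (continuum #<= [set: nat -> bool])%card.
Proof.
apply/pcard_injP; exists (fun x : R => set_bits [set q : rat | ratr q < x]).
by move=> x y _ _ /set_bits_inj /rat_cut_inj.
Qed.

Lemma powerset_le_continuum (T : countType) : ([set: set T] #<= continuum)%card.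
Proof.
apply: card_le_trans bits_le_continuum.
by apply/pcard_injP; exists (@set_bits T) => S S' _ _ /set_bits_inj.
Qed.

Lemma continuum_square : ([set: R * R] #<= continuum)%card.
Proof.
apply: card_le_trans (powerset_le_continuum (rat + rat)%type).
pose cuts (xy : R * R) : set (rat + rat) :=
  [set t | if t is inl q then ratr q < xy.1 else if t is inr q then ratr q < xy.2 else False].
apply/pcard_injP; exists cuts => -[x y] [x' y'] _ _ e.
have /rat_cut_inj/= -> := congr1 (fun S => S \o inl) e.
by have /rat_cut_inj/= -> := congr1 (fun S => S \o inr) e.
Qed.

Section ClosedSetCode.
Variables (T : topologicalType) (d : T -> T -> R) (D : set T) (g : T -> nat).
Hypotheses (hd : complete_compatible_metric d) (D_dense : dense D).
Hypothesis g_inj : {in D &, injective g}.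

Definition closed_code (C : set T) : set (nat * nat) :=
  [set nk | exists2 z, D z & g z = nk.1 /\ forall y, d z y < nk.2.+1%:R^-1 -> ~ C y].

Lemma closed_code_le C C' : closed C' -> closed_code C' `<=` closed_code C -> C `<=` C'.
Proof.
move=> C'_closed C'C x Cx; apply: contrapT => C'x.
have [e e0 eC'] := (metric_openP hd _).1 (closed_openC C'_closed) x C'x.
have [k _ /(_ k (leqnn k)) ke] := near_infty_natSinv_lt (PosNum (divr_gt0 e0 (ltr0Sn _ 1))).
have k_gt0 : 0 < k.+1%:R^-1 :> R by rewrite invr_gt0.
have [z Dz xz] := dense_metric_ball hd D_dense x k_gt0.
have /C'C[z' Dz' [gz'z z'C]] : closed_code C' (g z, k).
  exists z => //; split=> // y zy; apply: eC' => /=.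
  (* lra needs k.+1%:R^-1 as a single syntactic atom *)
  have {}zy : d z y < k.+1%:R^-1 :> R := zy.
  have {}ke : k.+1%:R^-1 < e / 2 :> R := ke.
  have := metric_triangle hd x z y; move: (k.+1%:R^-1) xz zy ke => r; lra.
have z'z : z' = z by apply: g_inj; rewrite ?in_setE.
by apply: (z'C x _ Cx); rewrite z'z metric_sym.
Qed.

Lemma closed_code_inj C C' : closed C -> closed C' ->
  closed_code C = closed_code C' -> C = C'.
Proof.
move=> C_closed C'_closed CC'.
by apply/seteqP; split; apply: closed_code_le => //; rewrite CC'.
Qed.

End ClosedSetCode.

Lemma polish_closed_code (T : topologicalType) : polish_space T ->
  exists code : set T -> R,
    forall C C', closed C -> closed C' -> code C = code C' -> C = C'.
Proof.
move=> [[D [/pcard_injP[g g_inj] D_dense]] [d hd]].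
have [e e_inj] := continuum_inj (powerset_le_continuum (nat * nat)%type).
exists (e \o closed_code d D g) => C C' C_closed C'_closed /e_inj.
exact: closed_code_inj.
Qed.

Lemma polish_le_continuum (T : topologicalType) :
  polish_space T -> ([set: T] #<= continuum)%card.
Proof.
move=> T_polish; have [code code_inj] := polish_closed_code T_polish.
have [_ [d hd]] := T_polish; apply/pcard_injP; exists (fun x => code [set x]).
move=> x y _ _ /(code_inj _ _ (@closed_metric_set1 _ _ hd x) (@closed_metric_set1 _ _ hd y)).
by move=> /seteqP[/(_ x erefl)].
Qed.

Lemma perfect_ge_continuum (T : topologicalType) (P : set T) : polish_space T ->
  perfect_set P -> P !=set0 -> (continuum #<= P)%card.
Proof.
move=> [_ [d hd]] P_perfect P0; have [h h_inj hP] := perfect_bits_inj hd P_perfect P0.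
apply: card_le_trans continuum_le_bits _.
by apply: (card_le_inj (f := h)) => [b b' _ _ /h_inj|_ [b _ <-]].
Qed.

Definition bernstein_target (I : Type) (Y : I -> topologicalType) :=
  {k : {i : I & set (Y i)} | perfect_set (projT2 k) /\ projT2 k !=set0}.

Lemma bernstein_targets_le_continuum (I : Type) (Y : I -> topologicalType) :
  ([set: I] #<= continuum)%card -> (forall i, polish_space (Y i)) ->
  ([set: bernstein_target Y] #<= continuum)%card.
Proof.
move=> /continuum_inj[phi phi_inj] Y_polish.
pose code i := sval (cid (polish_closed_code (Y_polish i))).
have code_inj i := svalP (cid (polish_closed_code (Y_polish i))).
have [pair pair_inj] := continuum_inj continuum_square.
apply/pcard_injP; exists (fun k => pair (phi (projT1 (sval k)), code _ (projT2 (sval k)))).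
move=> [[i C] CP] [[i' C'] C'P] _ _ /pair_inj /= [/phi_inj ii'].
move: C' C'P; rewrite -ii' => C' C'P.
move=> /(code_inj i _ _ CP.1.1 C'P.1.1) /= CC'; subst C'.
by congr exist; exact: Prop_irrelevance.
Qed.

Theorem mainTheorem1
  (I : Type) (X : topologicalType) (Y : I -> topologicalType)
  (f : forall i : I, X -> Y i) :
  continuum_regular ->
  ([set: I] #= continuum)%card ->
  polish_space X ->
  (forall i, polish_space (Y i)) ->
  (forall i, f i @` [set: X] = [set: Y i]) ->
  (forall i (y : Y i), card_lt (f i @^-1` [set y]) continuum) ->
  exists A : set X, forall i, bernstein_set (f i @` A).
Proof.
move=> reg I_eq_c X_polish Y_polish f_surj fiber_small.
have I_le_c : ([set: I] #<= continuum)%card by move: I_eq_c; rewrite card_eq_le => /andP[].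
have [lt [lt_wf lt_total lt_small]] :=
  small_segment_order (bernstein_targets_le_continuum I_le_c Y_polish).
have target_large (k : bernstein_target Y) : ~ small (projT2 (sval k)).
  by case: k => -[i P] [P_perfect P0]; exact/not_small/(perfect_ge_continuum (Y_polish i)).
have [A A_splits] := exists_splitting_set reg (polish_le_continuum X_polish) f_surj
  fiber_small target_large lt_wf lt_total lt_small.
by exists A => i P P_perfect P0; exact: A_splits (exist _ (existT _ i P) (conj P_perfect P0)).
Qed.
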